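(* Let $S$ be a permutative Gray monoid acting on a 2-category $X$. A 2-cell $\langle p,A,F\rangle$ of $S^{-1}X$ is invertible if and only if the 1-cell $p$ is an equivalence in $S$, the 2-cell $A$ is invertible in $S$, and the 2-cell $F$ is invertible in $X$.
   Context: Permutative Gray monoid $(S,\oplus,e,\beta)$: a 2-category with a strictly associative, strictly unital 2-functor $\oplus\colon S\otimes S\to S$ out of the Gray tensor product (written as juxtaposition) and a symmetry 2-natural isomorphism $\beta$ satisfying the usual axioms. An action of $S$ on $X$ is a 2-functor $S\otimes X\to X$, $(s,x)\mapsto sx$, with $ex=x$ and $(st)x=s(tx)$ on all cells. $S^{-1}X$: objects $(a,x)$; 1-cells $(a,x)\to(b,y)$ are triples $(s,\alpha,\phi)$ with $s\in S$, $\alpha\colon sa\to b$ in $S$, $\phi\colon sx\to y$ in $X$; 2-cells $(s,\alpha,\phi)\Rightarrow(s',\alpha',\phi')$ are equivalence classes $\langle p,A,F\rangle$ with $p\colon s\to s'$ a 1-cell of $S$, $A\colon\alpha\Rightarrow\alpha'\circ pa$, $F\colon\phi\Rightarrow\phi'\circ px$, where $\langle p,A,F\rangle=\langle q,B,G\rangle$ iff there exists an invertible 2-cell $\Theta\colon p\Rightarrow q$ with $(\alpha'*\Theta a)\circ A=B$ and $(\phi'*\Theta x)\circ F=G$; vertical composition $\langle p',A',F'\rangle\circ\langle p,A,F\rangle=\langle p'p,(A'*pa)\circ A,(F'*px)\circ F\rangle$, identity $\langle 1,1,1\rangle$. A 1-cell is an equivalence if it has a pseudo-inverse up to invertible 2-cells.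 *)

From Stdlib Require Import Logic.Eqdep.

Record Cat2Data : Type := {
  ob : Type;
  hom : ob -> ob -> Type;
  cell : forall a b : ob, hom a b -> hom a b -> Type;
  id1 : forall a : ob, hom a a;
  comp1 : forall a b c : ob, hom b c -> hom a b -> hom a c;   (* comp1 g f = g o f *)
  id2 : forall (a b : ob) (f : hom a b), cell a b f f;
  vcomp : forall (a b : ob) (f g h : hom a b),
      cell a b g h -> cell a b f g -> cell a b f h;            (* vcomp beta alpha = beta o alpha *)
  hcomp : forall (a b c : ob) (f f' : hom a b) (g g' : hom b c),
      cell b c g g' -> cell a b f f' ->
      cell a c (comp1 a b c g f) (comp1 a b c g' f')
}.

Arguments hom {_} _ _.
Arguments cell {_ _ _} _ _.
Arguments id1 {_} _.
Arguments comp1 {_ _ _ _} _ _.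
Arguments id2 {_ _ _} _.
Arguments vcomp {_ _ _ _ _ _} _ _.
Arguments hcomp {_ _ _ _ _ _ _ _} _ _.

(* heterogeneous equality of 1-cells / 2-cells (used to state strict
   equalities whose two sides only have propositionally equal boundaries) *)
Definition tot1 {C : Cat2Data} {a b : ob C} (f : hom a b)
  : {a : ob C & {b : ob C & hom a b}} := existT _ a (existT _ b f).
Definition heq1 {C : Cat2Data} {a b a' b' : ob C} (f : hom a b) (g : hom a' b')
  : Prop := tot1 f = tot1 g.

Definition tot2 {C : Cat2Data} {a b : ob C} {f g : hom a b} (al : cell f g)
  : {a : ob C & {b : ob C & {f : hom a b & {g : hom a b & cell f g}}}} :=
  existT _ a (existT _ b (existT _ f (existT _ g al))).
Definition heq2 {C : Cat2Data} {a b a' b' : ob C} {f g : hom a b} {f' g' : hom a' b'}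
  (al : cell f g) (be : cell f' g') : Prop := tot2 al = tot2 be.

Definition castc {C : Cat2Data} {a b : ob C} {f f' g g' : hom a b}
  (e1 : f = f') (e2 : g = g') (al : cell f g) : cell f' g' :=
  match e1 in _ = f1 return cell f1 g' with
  | eq_refl => match e2 in _ = g1 return cell f g1 with eq_refl => al end
  end.

Definition cast1 {C : Cat2Data} {a a' b b' : ob C}
  (e1 : a = a') (e2 : b = b') (f : hom a b) : hom a' b' :=
  match e1 in _ = a1 return hom a1 b' with
  | eq_refl => match e2 in _ = b1 return hom a b1 with eq_refl => f end
  end.

Record Cat2Laws (C : Cat2Data) : Prop := {
  c_assoc : forall (a b c d : ob C) (h : hom c d) (g : hom b c) (f : hom a b),
      comp1 h (comp1 g f) = comp1 (comp1 h g) f;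
  c_idl : forall (a b : ob C) (f : hom a b), comp1 (id1 b) f = f;
  c_idr : forall (a b : ob C) (f : hom a b), comp1 f (id1 a) = f;
  v_assoc : forall (a b : ob C) (f g h k : hom a b)
      (ga : cell h k) (be : cell g h) (al : cell f g),
      vcomp ga (vcomp be al) = vcomp (vcomp ga be) al;
  v_idl : forall (a b : ob C) (f g : hom a b) (al : cell f g), vcomp (id2 g) al = al;
  v_idr : forall (a b : ob C) (f g : hom a b) (al : cell f g), vcomp al (id2 f) = al;
  h_id2 : forall (a b c : ob C) (f : hom a b) (g : hom b c),
      hcomp (id2 g) (id2 f) = id2 (comp1 g f);
  h_interchange : forall (a b c : ob C) (f f' f'' : hom a b) (g g' g'' : hom b c)
      (be' : cell g' g'') (be : cell g g') (al' : cell f' f'') (al : cell f f'),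
      hcomp (vcomp be' be) (vcomp al' al) = vcomp (hcomp be' al') (hcomp be al);
  h_assoc : forall (a b c d : ob C) (f f' : hom a b) (g g' : hom b c) (h h' : hom c d)
      (ga : cell h h') (be : cell g g') (al : cell f f'),
      heq2 (hcomp ga (hcomp be al)) (hcomp (hcomp ga be) al);
  h_idl : forall (a b : ob C) (f f' : hom a b) (al : cell f f'),
      heq2 (hcomp (id2 (id1 b)) al) al;
  h_idr : forall (a b : ob C) (f f' : hom a b) (al : cell f f'),
      heq2 (hcomp al (id2 (id1 a))) al
}.

Arguments c_assoc {_} _ {_ _ _ _} _ _ _.
Arguments c_idl {_} _ {_ _} _.
Arguments c_idr {_} _ {_ _} _.

Record Cat2 : Type := { c2d :> Cat2Data; c2l : Cat2Laws c2d }.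

Definition inv2 {C : Cat2Data} {a b : ob C} {f g : hom a b} (th : cell f g) : Prop :=
  exists th' : cell g f, vcomp th' th = id2 f /\ vcomp th th' = id2 g.

Definition isEquiv1 {C : Cat2Data} {a b : ob C} (p : hom a b) : Prop :=
  exists q : hom b a,
    (exists Ph : cell (comp1 q p) (id1 a), inv2 Ph) /\
    (exists Ps : cell (comp1 p q) (id1 b), inv2 Ps).

(* 2-functors A (x) B -> C out of the Gray tensor product, given by     *)
(* their cubical data: 2-functors in each variable separately, agreeing *)
(* on objects, plus invertible interchange 2-cells                      *)

Record CubData (A B C : Cat2Data) : Type := {
  F0 : ob A -> ob B -> ob C;
  L1 : forall (a : ob A) (b b' : ob B), hom b b' -> hom (F0 a b) (F0 a b');
  L2 : forall (a : ob A) (b b' : ob B) (g g' : hom b b'),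
      cell g g' -> cell (L1 a b b' g) (L1 a b b' g');
  R1 : forall (a a' : ob A), hom a a' -> forall b : ob B, hom (F0 a b) (F0 a' b);
  R2 : forall (a a' : ob A) (p p' : hom a a'),
      cell p p' -> forall b : ob B, cell (R1 a a' p b) (R1 a a' p' b);
  Sg : forall (a a' : ob A) (b b' : ob B) (p : hom a a') (g : hom b b'),
      cell (comp1 (L1 a' b b' g) (R1 a a' p b)) (comp1 (R1 a a' p b') (L1 a b b' g));
  Sginv : forall (a a' : ob A) (b b' : ob B) (p : hom a a') (g : hom b b'),
      cell (comp1 (R1 a a' p b') (L1 a b b' g)) (comp1 (L1 a' b b' g) (R1 a a' p b))
}.

Arguments F0 {_ _ _} _ _ _.
Arguments L1 {_ _ _} _ _ {_ _} _.
Arguments L2 {_ _ _} _ _ {_ _ _ _} _.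
Arguments R1 {_ _ _} _ {_ _} _ _.
Arguments R2 {_ _ _} _ {_ _ _ _} _ _.
Arguments Sg {_ _ _} _ {_ _ _ _} _ _.
Arguments Sginv {_ _ _} _ {_ _ _ _} _ _.

Record CubLaws (A B C : Cat2) (F : CubData A B C) : Prop := {
  L1_id : forall a b, L1 F a (id1 b) = id1 (F0 F a b);
  L1_comp : forall a (b b' b'' : ob B) (g1 : hom b b') (g2 : hom b' b''),
      L1 F a (comp1 g2 g1) = comp1 (L1 F a g2) (L1 F a g1);
  L2_id : forall a (b b' : ob B) (g : hom b b'), L2 F a (id2 g) = id2 (L1 F a g);
  L2_v : forall a (b b' : ob B) (g g' g'' : hom b b') (ps : cell g' g'') (ph : cell g g'),
      L2 F a (vcomp ps ph) = vcomp (L2 F a ps) (L2 F a ph);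
  L2_h : forall a (b b' b'' : ob B) (g g' : hom b b') (k k' : hom b' b'')
      (ps : cell k k') (ph : cell g g'),
      heq2 (L2 F a (hcomp ps ph)) (hcomp (L2 F a ps) (L2 F a ph));
  R1_id : forall a b, R1 F (id1 a) b = id1 (F0 F a b);
  R1_comp : forall (a a' a'' : ob A) b (p1 : hom a a') (p2 : hom a' a''),
      R1 F (comp1 p2 p1) b = comp1 (R1 F p2 b) (R1 F p1 b);
  R2_id : forall (a a' : ob A) b (p : hom a a'), R2 F (id2 p) b = id2 (R1 F p b);
  R2_v : forall (a a' : ob A) b (p p' p'' : hom a a') (ps : cell p' p'') (ph : cell p p'),
      R2 F (vcomp ps ph) b = vcomp (R2 F ps b) (R2 F ph b);
  R2_h : forall (a a' a'' : ob A) b (p p' : hom a a') (q q' : hom a' a'')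
      (ps : cell q q') (ph : cell p p'),
      heq2 (R2 F (hcomp ps ph) b) (hcomp (R2 F ps b) (R2 F ph b));
  Sg_inv1 : forall (a a' : ob A) (b b' : ob B) (p : hom a a') (g : hom b b'),
      vcomp (Sginv F p g) (Sg F p g) = id2 _;
  Sg_inv2 : forall (a a' : ob A) (b b' : ob B) (p : hom a a') (g : hom b b'),
      vcomp (Sg F p g) (Sginv F p g) = id2 _;
  Sg_nat : forall (a a' : ob A) (b b' : ob B) (p p' : hom a a') (g g' : hom b b')
      (th : cell p p') (ph : cell g g'),
      vcomp (hcomp (R2 F th b') (L2 F a ph)) (Sg F p g)
      = vcomp (Sg F p' g') (hcomp (L2 F a' ph) (R2 F th b));
  Sg_id1 : forall (a : ob A) (b b' : ob B) (g : hom b b'),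
      heq2 (Sg F (id1 a) g) (id2 (L1 F a g));
  Sg_id2 : forall (a a' : ob A) (b : ob B) (p : hom a a'),
      heq2 (Sg F p (id1 b)) (id2 (R1 F p b));
  Sg_compL : forall (a a' : ob A) (b b' b'' : ob B)
      (p : hom a a') (g1 : hom b b') (g2 : hom b' b''),
      heq2 (Sg F p (comp1 g2 g1))
        (vcomp (hcomp (Sg F p g2) (id2 (L1 F a g1)))
           (castc eq_refl (c_assoc (c2l C) (L1 F a' g2) (R1 F p b') (L1 F a g1))
              (hcomp (id2 (L1 F a' g2)) (Sg F p g1))));
  Sg_compR : forall (a a' a'' : ob A) (b b' : ob B)
      (p1 : hom a a') (p2 : hom a' a'') (g : hom b b'),
      heq2 (Sg F (comp1 p2 p1) g)
        (vcomp (hcomp (id2 (R1 F p2 b')) (Sg F p1 g))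
           (castc eq_refl (eq_sym (c_assoc (c2l C) (R1 F p2 b') (L1 F a' g) (R1 F p1 b)))
              (hcomp (Sg F p2 g) (id2 (R1 F p1 b)))))
}.

Arguments CubLaws {_ _ _} _.
Arguments R1_comp {_ _ _ _} _ {_ _ _} _ _ _.
Arguments R1_id {_ _ _ _} _ _ _.

Record UnitL (A B : Cat2) (F : CubData A B B) (e : ob A) : Prop := {
  ul_ob : forall x, F0 F e x = x;
  ul_1 : forall (x y : ob B) (f : hom x y), heq1 (L1 F e f) f;
  ul_2 : forall (x y : ob B) (f g : hom x y) (ph : cell f g), heq2 (L2 F e ph) ph
}.

Arguments UnitL {_ _} _ _.

Record UnitR (A : Cat2) (P : CubData A A A) (e : ob A) : Prop := {
  ur_ob : forall s, F0 P s e = s;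
  ur_1 : forall (s s' : ob A) (p : hom s s'), heq1 (R1 P p e) p;
  ur_2 : forall (s s' : ob A) (p p' : hom s s') (th : cell p p'), heq2 (R2 P th e) th
}.

Arguments UnitR {_} _ _.

Record ActAssoc (A B : Cat2) (P : CubData A A A) (F : CubData A B B) : Prop := {
  aa_ob : forall s t x, F0 F (F0 P s t) x = F0 F s (F0 F t x);
  aa_1a : forall (s s' t : ob A) x (p : hom s s'),
      heq1 (R1 F (R1 P p t) x) (R1 F p (F0 F t x));
  aa_1b : forall (s t t' : ob A) x (q : hom t t'),
      heq1 (R1 F (L1 P s q) x) (L1 F s (R1 F q x));
  aa_1c : forall (s t : ob A) (x y : ob B) (f : hom x y),
      heq1 (L1 F (F0 P s t) f) (L1 F s (L1 F t f));
  aa_2a : forall (s s' t : ob A) x (p p' : hom s s') (th : cell p p'),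
      heq2 (R2 F (R2 P th t) x) (R2 F th (F0 F t x));
  aa_2b : forall (s t t' : ob A) x (q q' : hom t t') (ps : cell q q'),
      heq2 (R2 F (L2 P s ps) x) (L2 F s (R2 F ps x));
  aa_2c : forall (s t : ob A) (x y : ob B) (f g : hom x y) (ph : cell f g),
      heq2 (L2 F (F0 P s t) ph) (L2 F s (L2 F t ph));
  aa_Sab : forall (s s' t t' : ob A) x (p : hom s s') (q : hom t t'),
      heq2 (R2 F (Sg P p q) x) (Sg F p (R1 F q x));
  aa_Sbc : forall (s t t' : ob A) (x y : ob B) (q : hom t t') (f : hom x y),
      heq2 (Sg F (L1 P s q) f) (L2 F s (Sg F q f));
  aa_Sac : forall (s s' t : ob A) (x y : ob B) (p : hom s s') (f : hom x y),
      heq2 (Sg F (R1 P p t) f) (Sg F p (L1 F t f))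
}.

Arguments ActAssoc {_ _} _ _.
Arguments aa_ob {_ _ _ _} _ _ _ _.

Record PGM : Type := {
  pS :> Cat2;
  pplus : CubData pS pS pS;
  pplus_laws : CubLaws pplus;
  pe : ob pS;
  pplus_unitL : UnitL pplus pe;
  pplus_unitR : UnitR pplus pe;
  pplus_assoc : ActAssoc pplus pplus;
  pbeta : forall s t : ob pS, hom (F0 pplus s t) (F0 pplus t s);
  pbeta_nat1 : forall (s s' t : ob pS) (p : hom s s'),
      comp1 (pbeta s' t) (R1 pplus p t) = comp1 (L1 pplus t p) (pbeta s t);
  pbeta_nat2 : forall (s t t' : ob pS) (q : hom t t'),
      comp1 (pbeta s t') (L1 pplus s q) = comp1 (R1 pplus q s) (pbeta s t);
  pbeta_nat1_2 : forall (s s' t : ob pS) (p p' : hom s s') (th : cell p p'),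
      heq2 (hcomp (id2 (pbeta s' t)) (R2 pplus th t)) (hcomp (L2 pplus t th) (id2 (pbeta s t)));
  pbeta_nat2_2 : forall (s t t' : ob pS) (q q' : hom t t') (ps : cell q q'),
      heq2 (hcomp (id2 (pbeta s t')) (L2 pplus s ps)) (hcomp (R2 pplus ps s) (id2 (pbeta s t)));
  pbeta_Sg : forall (s s' t t' : ob pS) (p : hom s s') (q : hom t t'),
      heq2 (hcomp (id2 (pbeta s' t')) (Sg pplus p q)) (hcomp (Sginv pplus q p) (id2 (pbeta s t)));
  pbeta_inv : forall s t : ob pS, comp1 (pbeta t s) (pbeta s t) = id1 (F0 pplus s t);
  pbeta_unit : forall s : ob pS, heq1 (pbeta s pe) (id1 s);
  pbeta_hex : forall s t u : ob pS,
      heq1 (pbeta (F0 pplus s t) u)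
        (comp1 (R1 pplus (pbeta s u) t)
           (cast1 (eq_sym (aa_ob pplus_assoc s t u)) (eq_sym (aa_ob pplus_assoc s u t))
              (L1 pplus s (pbeta t u))))
}.

Record Action (S : PGM) (X : Cat2) : Type := {
  act :> CubData S X X;
  act_laws : CubLaws act;
  act_unit : UnitL act (pe S);
  act_assoc : ActAssoc (pplus S) act
}.
Arguments act {_ _} _.
Arguments act_laws {_ _} _.

Record Loc1 (S : PGM) (X : Cat2) (ac : Action S X)
  (a : ob S) (x : ob X) (b : ob S) (y : ob X) : Type := {
  l_s : ob S;
  l_al : hom (F0 (pplus S) l_s a) b;
  l_ph : hom (F0 ac l_s x) y
}.
Arguments Loc1 {_ _} _ _ _ _ _.
Arguments l_s {_ _ _ _ _ _ _} _.
Arguments l_al {_ _ _ _ _ _ _} _.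
Arguments l_ph {_ _ _ _ _ _ _} _.

(* representatives <p, A, F> of 2-cells *)
Record Loc2 (S : PGM) (X : Cat2) (ac : Action S X)
  (a : ob S) (x : ob X) (b : ob S) (y : ob X) (u v : Loc1 ac a x b y) : Type := {
  l_p : hom (l_s u) (l_s v);
  l_A : cell (l_al u) (comp1 (l_al v) (R1 (pplus S) l_p a));
  l_F : cell (l_ph u) (comp1 (l_ph v) (R1 ac l_p x))
}.
Arguments Loc2 {_ _ _ _ _ _ _} _ _.
Arguments Build_Loc2 {_ _ _ _ _ _ _ _ _} _ _ _.
Arguments l_p {_ _ _ _ _ _ _ _ _} _.
Arguments l_A {_ _ _ _ _ _ _ _ _} _.
Arguments l_F {_ _ _ _ _ _ _ _ _} _.

Lemma compR_eq (A B C : Cat2) (F : CubData A B C) (FL : CubLaws F)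
  (a a' a'' : ob A) (b : ob B) (z : ob C) (h : hom (F0 F a'' b) z)
  (p1 : hom a a') (p2 : hom a' a'') :
  comp1 (comp1 h (R1 F p2 b)) (R1 F p1 b) = comp1 h (R1 F (comp1 p2 p1) b).
Proof. rewrite (R1_comp FL). symmetry; apply (c_assoc (c2l C)). Qed.

Arguments compR_eq {_ _ _ _} _ {_ _ _ _ _} _ _ _.

Lemma idR_eq (A B C : Cat2) (F : CubData A B C) (FL : CubLaws F)
  (a : ob A) (b : ob B) (z : ob C) (h : hom (F0 F a b) z) :
  h = comp1 h (R1 F (id1 a) b).
Proof. rewrite (R1_id FL), (c_idr (c2l C)). reflexivity. Qed.
Arguments idR_eq {_ _ _ _} _ {_} _ {_} _.

Definition loc_vcomp {S : PGM} {X : Cat2} {ac : Action S X} {a x b y}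
  {u v w : Loc1 ac a x b y} (be : Loc2 v w) (al : Loc2 u v) : Loc2 u w :=
  Build_Loc2 (comp1 (l_p be) (l_p al))
    (castc eq_refl (compR_eq (pplus_laws S) (l_al w) (l_p al) (l_p be))
       (vcomp (hcomp (l_A be) (id2 (R1 (pplus S) (l_p al) a))) (l_A al)))
    (castc eq_refl (compR_eq (act_laws ac) (l_ph w) (l_p al) (l_p be))
       (vcomp (hcomp (l_F be) (id2 (R1 ac (l_p al) x))) (l_F al))).

Definition loc_id {S : PGM} {X : Cat2} {ac : Action S X} {a x b y}
  (u : Loc1 ac a x b y) : Loc2 u u :=
  Build_Loc2 (id1 (l_s u))
    (castc eq_refl (idR_eq (pplus_laws S) a (l_al u)) (id2 (l_al u)))
    (castc eq_refl (idR_eq (act_laws ac) x (l_ph u)) (id2 (l_ph u))).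

Definition loc_eq {S : PGM} {X : Cat2} {ac : Action S X} {a x b y}
  {u v : Loc1 ac a x b y} (al be : Loc2 u v) : Prop :=
  exists th : cell (l_p al) (l_p be),
    inv2 th /\
    vcomp (hcomp (id2 (l_al v)) (R2 (pplus S) th a)) (l_A al) = l_A be /\
    vcomp (hcomp (id2 (l_ph v)) (R2 ac th x)) (l_F al) = l_F be.

Definition loc_inv {S : PGM} {X : Cat2} {ac : Action S X} {a x b y}
  {u v : Loc1 ac a x b y} (al : Loc2 u v) : Prop :=
  exists be : Loc2 v u,
    loc_eq (loc_vcomp be al) (loc_id u) /\ loc_eq (loc_vcomp al be) (loc_id v).

From Stdlib Require Import Logic.Eqdep.
Import EqdepTheory.

(* Both components A : al => al' o pa and F : ph => ph' o px have the same
   shape: for a 2-functor F : A (x) B -> C out of the Gray tensor product and a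
   fixed object a of B, a "slice cell" over p : s -> t is a 2-cell
   h => h' o F(p,a).  Slice cells compose exactly as the components of 2-cells
   of S^{-1}X do, and a modification th : p => p' acts on them by whiskering
   with F(th,a).  The proof is therefore carried out once for slice cells.
   - Only if: if (p,A) and (q,B) are inverse up to invertible th : qp => 1 and
     th' : pq => 1, then (B pa) o A and (A qa) o B are invertible, whence
     B pa has a left and a right inverse, and A is invertible.
   - If: improve the equivalence (p,q) so that one triangle identity holds
     (a standard argument using that whiskering by an equivalence is fully
     faithful on 2-cells); then the transpose of A^{-1} along (q, Ps^{-1}) is an
     inverse of A up to the modifications Th and Ps. *)

(* Turn a hypothesis [heq2 x y] into an equation between 2-cells, substituting
   the (necessarily equal) boundaries. *)
Ltac heq2_inv H := unfold heq2, tot2 in H;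
  repeat match type of H with
  | existT _ ?a _ = existT _ ?a _ => apply inj_pairT2 in H
  | existT _ ?a _ = existT _ ?b _ =>
      let E := fresh "E" in
      assert (E : a = b) by exact (f_equal (@projT1 _ _) H); subst
  end; subst.

Lemma heq2_eq {C : Cat2Data} {a b : ob C} {f g : hom a b} (x y : cell f g) :
  heq2 x y -> x = y.
Proof. intro H. heq2_inv H. reflexivity. Qed.

Lemma castc_heq {C : Cat2Data} {a b : ob C} {f f' g g' : hom a b}
  (e1 : f = f') (e2 : g = g') (x : cell f g) : heq2 (castc e1 e2 x) x.
Proof. destruct e1, e2. reflexivity. Qed.

Lemma heq2_vcomp {C : Cat2Data} {a b a' b' : ob C} {f g h : hom a b} {f' g' h' : hom a' b'}
  (x : cell g h) (y : cell f g) (x' : cell g' h') (y' : cell f' g') :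
  heq2 x x' -> heq2 y y' -> heq2 (vcomp x y) (vcomp x' y').
Proof. intros H1 H2. heq2_inv H1. heq2_inv H2. reflexivity. Qed.

Lemma heq2_hcomp {C : Cat2Data} {a b c a' b' c' : ob C} {f f1 : hom a b} {g g1 : hom b c}
  {f' f1' : hom a' b'} {g' g1' : hom b' c'}
  (x : cell g g1) (y : cell f f1) (x' : cell g' g1') (y' : cell f' f1') :
  heq2 x x' -> heq2 y y' -> heq2 (hcomp x y) (hcomp x' y').
Proof. intros H1 H2. heq2_inv H1. heq2_inv H2. reflexivity. Qed.

Lemma heq2_R2 {A B C : Cat2Data} (F : CubData A B C) (b : ob B)
  {s t s' t' : ob A} {p p1 : hom s t} {p' p1' : hom s' t'}
  (x : cell p p1) (x' : cell p' p1') : heq2 x x' -> heq2 (R2 F x b) (R2 F x' b).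
Proof. intros H. heq2_inv H. reflexivity. Qed.

Section TwoCategory.
Context {C : Cat2}.

Lemma vcompA {a b : ob C} {f g h k : hom a b}
  (ga : cell h k) (be : cell g h) (al : cell f g) :
  vcomp ga (vcomp be al) = vcomp (vcomp ga be) al.
Proof. apply (v_assoc _ (c2l C)). Qed.

Lemma vcomp_id2l {a b : ob C} {f g : hom a b} (al : cell f g) : vcomp (id2 g) al = al.
Proof. apply (v_idl _ (c2l C)). Qed.

Lemma vcomp_id2r {a b : ob C} {f g : hom a b} (al : cell f g) : vcomp al (id2 f) = al.
Proof. apply (v_idr _ (c2l C)). Qed.

Lemma hcomp_id2 {a b c : ob C} (f : hom a b) (g : hom b c) :
  hcomp (id2 g) (id2 f) = id2 (comp1 g f).
Proof. apply (h_id2 _ (c2l C)). Qed.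

Lemma interchange {a b c : ob C} {f f' f'' : hom a b} {g g' g'' : hom b c}
  (be' : cell g' g'') (be : cell g g') (al' : cell f' f'') (al : cell f f') :
  hcomp (vcomp be' be) (vcomp al' al) = vcomp (hcomp be' al') (hcomp be al).
Proof. apply (h_interchange _ (c2l C)). Qed.

Lemma hcompA {a b c d : ob C} {f f' : hom a b} {g g' : hom b c} {h h' : hom c d}
  (ga : cell h h') (be : cell g g') (al : cell f f') :
  heq2 (hcomp ga (hcomp be al)) (hcomp (hcomp ga be) al).
Proof. apply (h_assoc _ (c2l C)). Qed.

Lemma hcomp_id1l {a b : ob C} {f f' : hom a b} (al : cell f f') :
  heq2 (hcomp (id2 (id1 b)) al) al.
Proof. apply (h_idl _ (c2l C)). Qed.

Lemma hcomp_id1r {a b : ob C} {f f' : hom a b} (al : cell f f') :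
  heq2 (hcomp al (id2 (id1 a))) al.
Proof. apply (h_idr _ (c2l C)). Qed.

Lemma heq2_vcomp_idl {a b a' b' : ob C} {f g h : hom a b} {h' : hom a' b'}
  (x : cell g h) (y : cell f g) : heq2 x (id2 h') -> heq2 (vcomp x y) y.
Proof. intros H. heq2_inv H. rewrite vcomp_id2l. reflexivity. Qed.

Lemma heq2_vcomp_idr {a b a' b' : ob C} {f g h : hom a b} {h' : hom a' b'}
  (x : cell g h) (y : cell f g) : heq2 y (id2 h') -> heq2 (vcomp x y) x.
Proof. intros H. heq2_inv H. rewrite vcomp_id2r. reflexivity. Qed.

Lemma castc_vcomp {a b : ob C} {f g g' : hom a b} (e : g = g') (x : cell f g) :
  castc eq_refl e x = vcomp (castc eq_refl e (id2 g)) x.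
Proof. destruct e. symmetry. apply vcomp_id2l. Qed.

Lemma castc_cancel {a b : ob C} {f g : hom a b} (e : f = g) :
  vcomp (castc eq_refl e (id2 f)) (castc eq_refl (eq_sym e) (id2 g)) = id2 g.
Proof. destruct e. apply vcomp_id2l. Qed.

Lemma whiskR_vcomp {a b c : ob C} {f g h : hom b c} (x : cell g h) (y : cell f g) (P : hom a b) :
  hcomp (vcomp x y) (id2 P) = vcomp (hcomp x (id2 P)) (hcomp y (id2 P)).
Proof. rewrite <- interchange, vcomp_id2l. reflexivity. Qed.

Lemma whiskL_vcomp {a b c : ob C} {f g h : hom a b} (x : cell g h) (y : cell f g) (P : hom b c) :
  hcomp (id2 P) (vcomp x y) = vcomp (hcomp (id2 P) x) (hcomp (id2 P) y).
Proof. rewrite <- interchange, vcomp_id2l. reflexivity. Qed.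

(* Left and right whiskers commute (both equal the horizontal composite). *)
Lemma whisk_commute {a b c : ob C} {f g : hom b c} {K I : hom a b} (x : cell f g) (T : cell K I) :
  vcomp (hcomp (id2 g) T) (hcomp x (id2 K)) = vcomp (hcomp x (id2 I)) (hcomp (id2 f) T).
Proof. rewrite <- !interchange, !vcomp_id2l, !vcomp_id2r. reflexivity. Qed.

Lemma cast_whiskR_comp {X Y Y2 b : ob C} {f g : hom Y b} (x : cell f g) (Q : hom Y2 Y) (P : hom X Y2)
  (K : hom X Y) (eK : K = comp1 Q P) (e1 : comp1 (comp1 f Q) P = comp1 f K)
  (e2 : comp1 (comp1 g Q) P = comp1 g K) :
  vcomp (castc eq_refl e2 (id2 _)) (hcomp (hcomp x (id2 Q)) (id2 P)) =
  vcomp (hcomp x (id2 K)) (castc eq_refl e1 (id2 _)).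
Proof.
  subst K. apply heq2_eq.
  eapply eq_trans; [eapply heq2_vcomp_idl; apply castc_heq|].
  symmetry. eapply eq_trans; [eapply heq2_vcomp_idr; apply castc_heq|].
  rewrite <- hcomp_id2. apply hcompA.
Qed.

Lemma cast_whiskR_id {Y b : ob C} {f g : hom Y b} (x : cell f g) (I : hom Y Y)
  (eI : I = id1 Y) (e1 : f = comp1 f I) (e2 : g = comp1 g I) :
  vcomp (hcomp x (id2 I)) (castc eq_refl e1 (id2 f)) = vcomp (castc eq_refl e2 (id2 g)) x.
Proof.
  subst I. apply heq2_eq.
  eapply eq_trans; [eapply heq2_vcomp_idr; apply castc_heq|].
  symmetry. eapply eq_trans; [eapply heq2_vcomp_idl; apply castc_heq|].
  symmetry. apply hcomp_id1r.
Qed.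

Lemma inv2_id {a b : ob C} (f : hom a b) : inv2 (id2 f).
Proof. exists (id2 f). split; apply vcomp_id2l. Qed.

Lemma inv2_castc {a b : ob C} {f f' g g' : hom a b} (e1 : f = f') (e2 : g = g')
  (x : cell f g) : inv2 x -> inv2 (castc e1 e2 x).
Proof. destruct e1, e2. auto. Qed.

Lemma inv2_vcomp {a b : ob C} {f g h : hom a b} (x : cell g h) (y : cell f g) :
  inv2 x -> inv2 y -> inv2 (vcomp x y).
Proof.
  intros [x' [Hx1 Hx2]] [y' [Hy1 Hy2]]. exists (vcomp y' x'). split.
  - rewrite vcompA, <- (vcompA y' x' x), Hx1, vcomp_id2r. exact Hy1.
  - rewrite vcompA, <- (vcompA x y y'), Hy2, vcomp_id2r. exact Hx2.
Qed.

Lemma inv2_cancel_l {a b : ob C} {f g h : hom a b} (x : cell g h) (y : cell f g) :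
  inv2 x -> inv2 (vcomp x y) -> inv2 y.
Proof.
  intros [x' [Hx1 _]] [z' [Hz1 Hz2]]. exists (vcomp z' x). split.
  - rewrite <- vcompA. exact Hz1.
  - assert (Ey : y = vcomp x' (vcomp x y)) by (rewrite vcompA, Hx1, vcomp_id2l; reflexivity).
    transitivity (vcomp (vcomp x' (vcomp x y)) (vcomp z' x)); [rewrite <- Ey; reflexivity|].
    rewrite <- vcompA, (vcompA (vcomp x y) z' x), Hz2, vcomp_id2l. exact Hx1.
Qed.

Lemma inv2_of_sections {a b : ob C} {f g : hom a b} (x : cell f g) :
  (exists l, vcomp l x = id2 f) -> (exists r, vcomp x r = id2 g) -> inv2 x.
Proof.
  intros [l Hl] [r Hr]. exists l. split; auto.
  assert (Elr : l = r).
  { rewrite <- (vcomp_id2r l), <- Hr, vcompA, Hl, vcomp_id2l. reflexivity. }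
  subst. exact Hr.
Qed.

Lemma inv2_whiskR {a b c : ob C} {f g : hom b c} (x : cell f g) (P : hom a b) :
  inv2 x -> inv2 (hcomp x (id2 P)).
Proof.
  intros [x' [H1 H2]]. exists (hcomp x' (id2 P)).
  rewrite <- !whiskR_vcomp, H1, H2, !hcomp_id2. split; reflexivity.
Qed.

Lemma inv2_whiskL {a b c : ob C} {f g : hom a b} (x : cell f g) (P : hom b c) :
  inv2 x -> inv2 (hcomp (id2 P) x).
Proof.
  intros [x' [H1 H2]]. exists (hcomp (id2 P) x').
  rewrite <- !whiskL_vcomp, H1, H2, !hcomp_id2. split; reflexivity.
Qed.

Lemma vcomp_cancel_l {a b : ob C} {f g h : hom a b} (x : cell g h) (y1 y2 : cell f g) :
  inv2 x -> vcomp x y1 = vcomp x y2 -> y1 = y2.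
Proof.
  intros [x' [Hx _]] E.
  rewrite <- (vcomp_id2l y1), <- (vcomp_id2l y2), <- Hx, <- !vcompA, E. reflexivity.
Qed.

Lemma vcomp_cancel_r {a b : ob C} {f g h : hom a b} (x1 x2 : cell g h) (y : cell f g) :
  inv2 y -> vcomp x1 y = vcomp x2 y -> x1 = x2.
Proof.
  intros [y' [_ Hy]] E.
  rewrite <- (vcomp_id2r x1), <- (vcomp_id2r x2), <- Hy, !vcompA, E. reflexivity.
Qed.

Lemma whiskL_comp {a b c d : ob C} (q : hom b c) (p : hom c d) {f g : hom a b} (x : cell f g) :
  heq2 (hcomp (id2 p) (hcomp (id2 q) x)) (hcomp (id2 (comp1 p q)) x).
Proof. rewrite <- hcomp_id2. apply hcompA. Qed.

(* Whiskering on the left by an endomorphism k isomorphic to the identity is a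
   bijection on 2-cells: its inverse conjugates by the isomorphism k => 1. *)
Section Unwhisk.
Context {s : ob C} {k : hom s s} (Ph : cell k (id1 s)) (Ph' : cell (id1 s) k).
Hypotheses (HPh1 : vcomp Ph' Ph = id2 k) (HPh2 : vcomp Ph Ph' = id2 (id1 s)).

Definition unwhisk {Z : ob C} {f g : hom Z s} (rho : cell (comp1 k f) (comp1 k g)) : cell f g :=
  castc (c_idl (c2l C) f) (c_idl (c2l C) g)
    (vcomp (hcomp Ph (id2 g)) (vcomp rho (hcomp Ph' (id2 f)))).

(* unwhisk is a left inverse of whiskering by k: k tau and 1 tau agree up to
   conjugation by Ph, since whiskers commute. *)
Lemma unwhisk_whisk {Z : ob C} {f g : hom Z s} (tau : cell f g) :
  unwhisk (hcomp (id2 k) tau) = tau.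
Proof.
  apply heq2_eq. unfold unwhisk.
  eapply eq_trans; [apply castc_heq|].
  rewrite vcompA, <- whisk_commute, <- vcompA, <- whiskR_vcomp, HPh2, hcomp_id2, vcomp_id2r.
  apply hcomp_id1l.
Qed.

(* unwhisk is injective, being a conjugate by invertible cells. *)
Lemma unwhisk_injective {Z : ob C} {f g : hom Z s} (rho1 rho2 : cell (comp1 k f) (comp1 k g)) :
  unwhisk rho1 = unwhisk rho2 -> rho1 = rho2.
Proof.
  intros E. unfold unwhisk in E.
  assert (Em : heq2 (vcomp (hcomp Ph (id2 g)) (vcomp rho1 (hcomp Ph' (id2 f))))
                    (vcomp (hcomp Ph (id2 g)) (vcomp rho2 (hcomp Ph' (id2 f))))).
  { pose proof (castc_heq (c_idl (c2l C) f) (c_idl (c2l C) g)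
                (vcomp (hcomp Ph (id2 g)) (vcomp rho1 (hcomp Ph' (id2 f))))) as H1.
    pose proof (castc_heq (c_idl (c2l C) f) (c_idl (c2l C) g)
                (vcomp (hcomp Ph (id2 g)) (vcomp rho2 (hcomp Ph' (id2 f))))) as H2.
    unfold heq2 in *. rewrite <- H1, <- H2, E. reflexivity. }
  apply heq2_eq in Em.
  apply vcomp_cancel_l in Em; [|apply inv2_whiskR; exists Ph'; tauto].
  apply vcomp_cancel_r in Em; [exact Em|apply inv2_whiskR; exists Ph; tauto].
Qed.

Lemma whisk_unwhisk {Z : ob C} {f g : hom Z s} (rho : cell (comp1 k f) (comp1 k g)) :
  hcomp (id2 k) (unwhisk rho) = rho.
Proof. apply unwhisk_injective. apply unwhisk_whisk. Qed.

Lemma inv2_unwhisk {Z : ob C} {f g : hom Z s} (rho : cell (comp1 k f) (comp1 k g)) :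
  inv2 rho -> inv2 (unwhisk rho).
Proof.
  intros Hrho. apply inv2_castc. repeat apply inv2_vcomp; auto; apply inv2_whiskR.
  - exists Ph'; tauto.
  - exists Ph; tauto.
Qed.

End Unwhisk.

Section Equivalence.
Context {s t : ob C} (p : hom s t) (q : hom t s).
Context (Ph : cell (comp1 q p) (id1 s)) (Ps : cell (comp1 p q) (id1 t)).
Hypotheses (HPh : inv2 Ph) (HPs : inv2 Ps).

(* Whiskering by the quasi-inverse q is faithful on 2-cells: whiskering
   further by p gives whiskering by pq, which is invertible via Ps. *)
Lemma whiskL_faithful {Z : ob C} {f g : hom Z t} (x y : cell f g) :
  heq2 (hcomp (id2 q) x) (hcomp (id2 q) y) -> x = y.
Proof.
  intros H. destruct HPs as [Ps' [_ HPs2]].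
  rewrite <- (unwhisk_whisk Ps Ps' HPs2 x), <- (unwhisk_whisk Ps Ps' HPs2 y).
  f_equal. apply heq2_eq.
  eapply eq_trans; [symmetry; apply whiskL_comp|].
  eapply eq_trans; [|apply whiskL_comp].
  apply heq2_hcomp; [reflexivity|exact H].
Qed.

(* Whiskering by p is full on invertible 2-cells: unwhisk q sg along qp and
   use faithfulness of whiskering by q. *)
Lemma whiskL_full {Z : ob C} {f g : hom Z s} (sg : cell (comp1 p f) (comp1 p g)) :
  inv2 sg -> exists tau : cell f g, hcomp (id2 p) tau = sg /\ inv2 tau.
Proof.
  intros Hsg. destruct HPh as [Ph' [HPh1 HPh2]].
  set (rho := castc (c_assoc (c2l C) q p f) (c_assoc (c2l C) q p g) (hcomp (id2 q) sg)).
  exists (unwhisk Ph Ph' rho). split.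
  - apply whiskL_faithful.
    eapply eq_trans; [apply whiskL_comp|].
    rewrite whisk_unwhisk by assumption. apply castc_heq.
  - apply inv2_unwhisk; auto. apply inv2_castc, inv2_whiskL, Hsg.
Qed.

(* Every equivalence can be improved to satisfy one triangle identity: there
   is an invertible Th : qp => 1 with p Th = Ps p (lift Ps p along p). *)
Lemma equiv_triangle :
  exists Th : cell (comp1 q p) (id1 s), inv2 Th /\ heq2 (hcomp (id2 p) Th) (hcomp Ps (id2 p)).
Proof.
  set (sg := castc (eq_sym (c_assoc (c2l C) p q p))
               (eq_trans (c_idl (c2l C) p) (eq_sym (c_idr (c2l C) p))) (hcomp Ps (id2 p))).
  destruct (whiskL_full sg) as [Th [ETh HTh]].
  - apply inv2_castc, inv2_whiskR, HPs.
  - exists Th. split; [exact HTh|]. rewrite ETh. apply castc_heq.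
Qed.

End Equivalence.
End TwoCategory.

Section Slice.
Context {A B C : Cat2} {F : CubData A B C} (FL : CubLaws F) (a : ob B).

Lemma inv2_R2 {s t : ob A} {p p' : hom s t} (x : cell p p') : inv2 x -> inv2 (R2 F x a).
Proof.
  intros [x' [H1 H2]]. exists (R2 F x' a).
  rewrite <- !(R2_v _ _ _ _ FL), H1, H2, !(R2_id _ _ _ _ FL). split; reflexivity.
Qed.

(* Composite of slice cells A0 over p and B0 over p', a slice cell over p' p;
   these are the components of vertical composition in S^{-1}X. *)
Definition slice_comp {s t r : ob A} {z : ob C} {h : hom (F0 F s a) z}
  {h' : hom (F0 F t a) z} {h'' : hom (F0 F r a) z} {p : hom s t} {p' : hom t r}
  (B0 : cell h' (comp1 h'' (R1 F p' a))) (A0 : cell h (comp1 h' (R1 F p a)))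
  : cell h (comp1 h'' (R1 F (comp1 p' p) a)) :=
  castc eq_refl (compR_eq FL h'' p p') (vcomp (hcomp B0 (id2 (R1 F p a))) A0).

Definition slice_id {s : ob A} {z : ob C} (h : hom (F0 F s a) z)
  : cell h (comp1 h (R1 F (id1 s) a)) :=
  castc eq_refl (idR_eq FL a h) (id2 h).

(* The modification th : p => p' carries the slice cell A0 over p to A1 over
   p'; this is the equation defining equality of 2-cells in S^{-1}X. *)
Definition slice_eq {s t : ob A} {z : ob C} {h : hom (F0 F s a) z} {h' : hom (F0 F t a) z}
  {p p' : hom s t} (th : cell p p') (A0 : cell h (comp1 h' (R1 F p a)))
  (A1 : cell h (comp1 h' (R1 F p' a))) : Prop :=
  vcomp (hcomp (id2 h') (R2 F th a)) A0 = A1.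

Lemma slice_eq_id_inv2 {s t : ob A} {z : ob C} {h : hom (F0 F s a) z} {h' : hom (F0 F t a) z}
  {p : hom s t} {q : hom t s} (B0 : cell h' (comp1 h (R1 F q a)))
  (A0 : cell h (comp1 h' (R1 F p a))) (th : cell (comp1 q p) (id1 s)) :
  inv2 th -> slice_eq th (slice_comp B0 A0) (slice_id h) ->
  inv2 (vcomp (hcomp B0 (id2 (R1 F p a))) A0).
Proof.
  unfold slice_eq, slice_comp, slice_id. intros Hth E.
  rewrite castc_vcomp, vcompA in E.
  apply (inv2_cancel_l (vcomp (hcomp (id2 h) (R2 F th a)) (castc eq_refl (compR_eq FL h p q) (id2 _)))).
  - apply inv2_vcomp; [apply inv2_whiskL, inv2_R2, Hth | apply inv2_castc, inv2_id].
  - rewrite E. apply inv2_castc, inv2_id.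
Qed.

(* A slice cell with an inverse up to invertible modifications is an
   invertible 2-cell: B0 pa has a left and a right inverse. *)
Lemma slice_inverse_inv2 {s t : ob A} {z : ob C} {h : hom (F0 F s a) z} {h' : hom (F0 F t a) z}
  {p : hom s t} {q : hom t s} (A0 : cell h (comp1 h' (R1 F p a)))
  (B0 : cell h' (comp1 h (R1 F q a)))
  (th : cell (comp1 q p) (id1 s)) (th' : cell (comp1 p q) (id1 t)) :
  inv2 th -> inv2 th' ->
  slice_eq th (slice_comp B0 A0) (slice_id h) -> slice_eq th' (slice_comp A0 B0) (slice_id h') ->
  inv2 A0.
Proof.
  intros Hth Hth' E E'.
  destruct (slice_eq_id_inv2 B0 A0 th Hth E) as [z0 [Hz1 Hz2]].
  destruct (slice_eq_id_inv2 A0 B0 th' Hth' E') as [z1 [Hz1' _]].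
  assert (HBp : inv2 (hcomp B0 (id2 (R1 F p a)))).
  { apply inv2_of_sections.
    - exists (hcomp (vcomp z1 (hcomp A0 (id2 (R1 F q a)))) (id2 (R1 F p a))).
      rewrite <- whiskR_vcomp, <- vcompA, Hz1'. apply hcomp_id2.
    - exists (vcomp A0 z0). rewrite vcompA. exact Hz2. }
  exact (inv2_cancel_l _ _ HBp (ex_intro _ z0 (conj Hz1 Hz2))).
Qed.

(* The transpose of A' : h' o pa => h along the equivalence: the slice cell
   h' => h' o (pq)a => h o qa over q, built from Ps' : 1 => pq. *)
Definition slice_transpose {s t : ob A} {z : ob C} {h : hom (F0 F s a) z} {h' : hom (F0 F t a) z}
  (p : hom s t) (q : hom t s) (Ps' : cell (id1 t) (comp1 p q))
  (A' : cell (comp1 h' (R1 F p a)) h) : cell h' (comp1 h (R1 F q a)) :=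
  vcomp (hcomp A' (id2 (R1 F q a)))
   (vcomp (castc eq_refl (eq_sym (compR_eq FL h' q p)) (id2 _))
     (vcomp (hcomp (id2 h') (R2 F Ps' a)) (castc eq_refl (idR_eq FL a h') (id2 h')))).

Lemma slice_transpose_counit {s t : ob A} {z : ob C} {h : hom (F0 F s a) z} {h' : hom (F0 F t a) z}
  (p : hom s t) (q : hom t s) (Ps : cell (comp1 p q) (id1 t)) (Ps' : cell (id1 t) (comp1 p q))
  (A0 : cell h (comp1 h' (R1 F p a))) (A' : cell (comp1 h' (R1 F p a)) h) :
  vcomp Ps Ps' = id2 _ -> vcomp A0 A' = id2 _ ->
  slice_eq Ps (slice_comp A0 (slice_transpose p q Ps' A')) (slice_id h').
Proof.
  intros HP HA. unfold slice_eq, slice_comp, slice_id, slice_transpose.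
  rewrite castc_vcomp.
  rewrite (vcompA (hcomp A0 _)), <- whiskR_vcomp, HA, hcomp_id2, vcomp_id2l.
  rewrite (vcompA (castc _ _ _)), castc_cancel, vcomp_id2l.
  rewrite vcompA, <- whiskL_vcomp, <- (R2_v _ _ _ _ FL), HP, (R2_id _ _ _ _ FL), hcomp_id2, vcomp_id2l.
  reflexivity.
Qed.

Lemma R2_triangle {s t : ob A} (p : hom s t) (q : hom t s)
  (Th : cell (comp1 q p) (id1 s)) (Ps : cell (comp1 p q) (id1 t)) :
  heq2 (hcomp (id2 p) Th) (hcomp Ps (id2 p)) ->
  heq2 (hcomp (id2 (R1 F p a)) (R2 F Th a)) (hcomp (R2 F Ps a) (id2 (R1 F p a))).
Proof.
  intros HTh. rewrite <- !(R2_id _ _ _ _ FL).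
  eapply eq_trans; [symmetry; apply (R2_h _ _ _ _ FL)|].
  eapply eq_trans; [apply heq2_R2, HTh|]. apply (R2_h _ _ _ _ FL).
Qed.

(* The transported triangle identity, whiskered by h' and written with the
   casts that appear when composing the transpose with a slice cell: the
   composite h' pa => h' (pq) pa => h' p (qp) a => h' pa is the identity. *)
Lemma slice_triangle {s t : ob A} {z : ob C} (h' : hom (F0 F t a) z)
  (p : hom s t) (q : hom t s) (Th : cell (comp1 q p) (id1 s))
  (Ps : cell (comp1 p q) (id1 t)) (Ps' : cell (id1 t) (comp1 p q)) :
  heq2 (hcomp (id2 p) Th) (hcomp Ps (id2 p)) -> vcomp Ps Ps' = id2 _ ->
  vcomp (hcomp (id2 (comp1 h' (R1 F p a))) (R2 F Th a))
   (vcomp (castc eq_refl (compR_eq FL (comp1 h' (R1 F p a)) p q) (id2 _))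
    (vcomp (hcomp (castc eq_refl (eq_sym (compR_eq FL h' q p)) (id2 _)) (id2 (R1 F p a)))
     (vcomp (hcomp (hcomp (id2 h') (R2 F Ps' a)) (id2 (R1 F p a)))
        (hcomp (castc eq_refl (idR_eq FL a h') (id2 h')) (id2 (R1 F p a))))))
  = castc eq_refl (idR_eq FL a (comp1 h' (R1 F p a))) (id2 _).
Proof.
  intros HTh HP. apply heq2_eq. eapply eq_trans; [|symmetry; apply castc_heq].
  eapply eq_trans.
  { apply (heq2_vcomp _ _ (hcomp (id2 h') (hcomp (R2 F Ps a) (id2 (R1 F p a))))
                       (hcomp (id2 h') (hcomp (R2 F Ps' a) (id2 (R1 F p a))))).
    - rewrite <- hcomp_id2. eapply eq_trans; [symmetry; apply hcompA|].
      apply heq2_hcomp; [reflexivity|]. exact (R2_triangle p q Th Ps HTh).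
    - eapply eq_trans; [eapply heq2_vcomp_idl; apply castc_heq|].
      eapply eq_trans; [eapply heq2_vcomp_idl|].
      { eapply eq_trans; [eapply heq2_hcomp; [apply castc_heq | reflexivity]|].
        rewrite hcomp_id2. reflexivity. }
      eapply eq_trans; [eapply heq2_vcomp_idr|].
      { eapply eq_trans; [eapply heq2_hcomp; [apply castc_heq | reflexivity]|].
        rewrite hcomp_id2. reflexivity. }
      symmetry. apply hcompA. }
  rewrite <- whiskL_vcomp, <- whiskR_vcomp, <- (R2_v _ _ _ _ FL), HP, (R2_id _ _ _ _ FL), !hcomp_id2.
  rewrite (R1_id FL t a), (c_idl (c2l C)). reflexivity.
Qed.

Lemma slice_transpose_unit {s t : ob A} {z : ob C} {h : hom (F0 F s a) z} {h' : hom (F0 F t a) z}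
  (p : hom s t) (q : hom t s) (Th : cell (comp1 q p) (id1 s)) (Ps : cell (comp1 p q) (id1 t))
  (Ps' : cell (id1 t) (comp1 p q))
  (A0 : cell h (comp1 h' (R1 F p a))) (A' : cell (comp1 h' (R1 F p a)) h) :
  heq2 (hcomp (id2 p) Th) (hcomp Ps (id2 p)) ->
  vcomp Ps Ps' = id2 _ -> vcomp A' A0 = id2 _ ->
  slice_eq Th (slice_comp (slice_transpose p q Ps' A') A0) (slice_id h).
Proof.
  intros HTh HP HA. unfold slice_eq, slice_comp, slice_id, slice_transpose.
  rewrite castc_vcomp, !whiskR_vcomp.
  rewrite <- (vcompA (hcomp (hcomp A' _) _)).
  rewrite (vcompA (castc _ _ _) (hcomp (hcomp A' _) _)).
  rewrite (cast_whiskR_comp A' _ _ _ (R1_comp FL a p q) (compR_eq FL (comp1 h' (R1 F p a)) p q)).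
  rewrite <- vcompA, (vcompA (hcomp (id2 h) _)), whisk_commute.
  rewrite <- vcompA, (vcompA (castc _ _ _) _ A0), (vcompA (hcomp (id2 _) (R2 F Th a)) _ A0).
  rewrite (slice_triangle h' p q Th Ps Ps' HTh HP), vcompA.
  rewrite (cast_whiskR_id A' _ (R1_id FL s a) _ (idR_eq FL a h)).
  rewrite <- vcompA, HA, vcomp_id2r. reflexivity.
Qed.

End Slice.

Theorem mainTheorem13 (S : PGM) (X : Cat2) (ac : Action S X)
  (a : ob S) (x : ob X) (b : ob S) (y : ob X) (u v : Loc1 ac a x b y)
  (al : Loc2 u v) :
  loc_inv al <-> isEquiv1 (l_p al) /\ inv2 (l_A al) /\ inv2 (l_F al).
Proof.
  split.
  (* An inverse <q,B,G> exhibits q as a quasi-inverse, and A, F are slice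
     cells with inverses up to the invertible modifications th, th'. *)
  - intros [be [[th [Hth [EA EF]]] [th' [Hth' [EA' EF']]]]].
    split; [|split].
    + exists (l_p be). split; [exists th | exists th']; assumption.
    + exact (slice_inverse_inv2 (pplus_laws S) a (l_A al) (l_A be) th th' Hth Hth' EA EA').
    + exact (slice_inverse_inv2 (act_laws ac) x (l_F al) (l_F be) th th' Hth Hth' EF EF').
  (* Conversely the transposes of A^{-1}, F^{-1} along an improved
     equivalence form an inverse, witnessed by Th and Ps. *)
  - intros [[q [[Ph HPh] [Ps HPs]]] [[A' [HA1 HA2]] [F' [HF1 HF2]]]].
    destruct (equiv_triangle (l_p al) q Ph Ps HPh HPs) as [Th [HTh HTri]].
    pose proof HPs as [Ps' [_ HPs2]].
    exists (Build_Loc2 q (slice_transpose (pplus_laws S) a (l_p al) q Ps' A')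
                         (slice_transpose (act_laws ac) x (l_p al) q Ps' F')).
    split.
    + exists Th. split; [exact HTh|split].
      * exact (slice_transpose_unit (pplus_laws S) a _ q Th Ps Ps' _ A' HTri HPs2 HA1).
      * exact (slice_transpose_unit (act_laws ac) x _ q Th Ps Ps' _ F' HTri HPs2 HF1).
    + exists Ps. split; [exact HPs|split].
      * exact (slice_transpose_counit (pplus_laws S) a _ q Ps Ps' _ A' HPs2 HA2).
      * exact (slice_transpose_counit (act_laws ac) x _ q Ps Ps' _ F' HPs2 HF2).
Qed.
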